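(* Let $p$ be an odd prime, let $m,k$ be integers with $0<k\le\lfloor m/2\rfloor$ and $m/\gcd(m,k)$ odd, and put $l=\gcd(m,k)$. Let $\alpha\in\mathbb{F}_{p^l}$ be a non-square in $\mathbb{F}_{p^m}$, and let $\sigma(x)=x^{p^s}$ with $0\le s\le\lfloor m/2\rfloor$. With $x\circ_k y=x^{p^k}y+y^{p^k}x$, define on $\mathbb{F}_{p^m}^2$ the multiplication $(a,b)*(c,d)=(a\circ_k c+\alpha\,\sigma(b\circ_k d),\ ad+bc)$, let $L(a,b)=(a+a^{p^k},b)$, and let $\mathbb{S}_{k,\sigma}=(\mathbb{F}_{p^m}^2,+,\star)$ be the semifield with $L(x)\star L(y)=x*y$. Then the nucleus $N(\mathbb{S}_{k,\sigma})$ (which equals its left and its right nucleus) is isomorphic to $\mathbb{F}_{p^t}$, where $t=\gcd(m,k,s)$ (with $\gcd(m,k,0)=\gcd(m,k)$).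
   Context: For a semifield $(\mathbb{S},+,\star)$: left nucleus $N_l=\{a:(a\star x)\star y=a\star(x\star y)\ \forall x,y\}$, middle nucleus $N_m=\{a:(x\star a)\star y=x\star(a\star y)\ \forall x,y\}$, right nucleus $N_r=\{a:(x\star y)\star a=x\star(y\star a)\ \forall x,y\}$, and nucleus $N=N_l\cap N_m\cap N_r$. These are finite fields; for commutative $\mathbb{S}$, $N_l=N_r=N$. *)

From mathcomp Require Import all_boot all_order all_algebra all_field.
Set Implicit Arguments. Unset Strict Implicit. Unset Printing Implicit Defensive.
Import GRing.Theory.
Local Open Scope ring_scope.

Definition circ (F : fieldType) (p k : nat) (x y : F) : F :=
  x ^+ (p ^ k) * y + y ^+ (p ^ k) * x.

Definition padd (F : fieldType) (u v : F * F) : F * F := (u.1 + v.1, u.2 + v.2).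

Definition smul (F : fieldType) (p k : nat) (alpha : F) (s : nat) (u v : F * F)
  : F * F :=
  (circ p k u.1 v.1 + alpha * (circ p k u.2 v.2) ^+ (p ^ s),
   u.1 * v.2 + u.2 * v.1).

Definition Lmap (F : fieldType) (p k : nat) (u : F * F) : F * F :=
  (u.1 + u.1 ^+ (p ^ k), u.2).

(* the inverse of L (L is a bijection under the hypotheses of the theorem) *)
Definition Linv (F : finFieldType) (p k : nat) (u : F * F) : F * F :=
  odflt (0, 0) [pick x : F * F | Lmap p k x == u].

Definition sstar (F : finFieldType) (p k : nat) (alpha : F) (s : nat)
  (u v : F * F) : F * F :=
  smul p k alpha s (Linv p k u) (Linv p k v).

Definition left_nucleus (T : finType) (op : T -> T -> T) : {set T} :=
  [set a | [forall x, forall y, op (op a x) y == op a (op x y)]].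
Definition middle_nucleus (T : finType) (op : T -> T -> T) : {set T} :=
  [set a | [forall x, forall y, op (op x a) y == op x (op a y)]].
Definition right_nucleus (T : finType) (op : T -> T -> T) : {set T} :=
  [set a | [forall x, forall y, op (op x y) a == op x (op y a)]].
Definition nucleus (T : finType) (op : T -> T -> T) : {set T} :=
  left_nucleus op :&: middle_nucleus op :&: right_nucleus op.

(* the subfield F_{p^t} of F (when t | m, |F| = p^m) *)
Definition Fsub (F : finFieldType) (p t : nat) : {set F} :=
  [set x : F | x ^+ (p ^ t) == x].
Arguments Fsub : clear implicits.

From mathcomp Require Import all_boot all_order all_algebra all_field.
From mathcomp Require Import ring zify.
Import GRing.Theory.
Local Open Scope ring_scope.

(* The product is commutative, so the left and right nuclei are the nucleus.
   Since m / gcd(m, k) is odd, a nonzero a with a^{p^k} = -a would be fixed by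
   x |-> x^{p^gcd(m, 2k)} = x^{p^gcd(m, k)}, hence by x |-> x^{p^k}, forcing
   2a = 0; so L is a bijection.  For e fixed by x |-> x^{p^k} the element
   L(e, 0) acts as multiplication by the scalar e, and if e is also fixed by
   sigma such scalars move freely through *, so L(e, 0) is nuclear.
   Conversely, write a right-nuclear element as L(e, g) and pick z not fixed by
   x |-> x^{p^k}; the right-nucleus identity at the pairs ((0,1), (z,0)),
   ((z,0), (z,0)) and ((0,1), (0,1)) yields e^{p^k} = e, then g = 0, then
   sigma(e) = e.  So the nucleus is L(F_{p^t} x 0), with t = gcd(m, k, s). *)

Set Implicit Arguments.
Unset Strict Implicit.
Unset Printing Implicit Defensive.

Section FixedPointsOfFrobeniusPowers.

Variables (R : pzSemiRingType) (p : nat) (x : R).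

Lemma fixed_expnD a b :
  x ^+ (p ^ a) = x -> x ^+ (p ^ b) = x -> x ^+ (p ^ (a + b)) = x.
Proof. by rewrite expnD exprM => -> ->. Qed.

Lemma fixed_expnDl a b :
  x ^+ (p ^ a) = x -> x ^+ (p ^ (a + b)) = x -> x ^+ (p ^ b) = x.
Proof. by rewrite expnD exprM => ->. Qed.

Lemma fixed_expnM q a : x ^+ (p ^ a) = x -> x ^+ (p ^ (q * a)) = x.
Proof.
move=> fix_a; elim: q => [|q IHq]; first by rewrite mul0n expn0 expr1.
by rewrite mulSn fixed_expnD.
Qed.

Lemma fixed_expn_dvd d n : (d %| n)%N -> x ^+ (p ^ d) = x -> x ^+ (p ^ n) = x.
Proof. by move=> /divnK <-; apply: fixed_expnM. Qed.

Lemma fixed_expn_gcd a b :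
  x ^+ (p ^ a) = x -> x ^+ (p ^ b) = x -> x ^+ (p ^ gcdn a b) = x.
Proof.
move=> fix_a fix_b; have [->|a_gt0] := posnP a; first by rewrite gcd0n.
have [c _ /dvdnP[q def_q]] := Bezoutl b a_gt0.
apply: (@fixed_expnDl (c * b)); first exact: fixed_expnM.
by rewrite addnC def_q fixed_expnM.
Qed.

End FixedPointsOfFrobeniusPowers.

Lemma gcdn_double m k : odd (m %/ gcdn m k) -> gcdn m (k + k) = gcdn m k.
Proof.
set g := gcdn m k => odd_m'.
have g_gt0 : (0 < g)%N by move: odd_m'; rewrite lt0n; apply: contraTneq => ->.
have [dv_gm dv_gk] : (g %| m /\ g %| k)%N by rewrite dvdn_gcdl dvdn_gcdr.
rewrite addnn -mul2n -{1}(divnK dv_gm) -{1}(divnK dv_gk) mulnA.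
rewrite -muln_gcdl Gauss_gcdr ?coprimen2 // muln_gcdl !divnK //.
Qed.

Lemma exists_expf_neq (F : finFieldType) n :
  (1 < n)%N -> (n < #|F|)%N -> exists z : F, z ^+ n != z.
Proof.
move=> n_gt1 n_lt_F; apply/existsP; apply: contraTT n_lt_F.
rewrite negb_exists -leqNgt => /forallP /= fixF.
pose P : {poly F} := 'X^n - 'X.
have sizeP : size P = n.+1.
  by rewrite size_polyDl ?size_polyXn // size_polyN size_polyX.
have P_neq0 : P != 0 by rewrite -size_poly_eq0 sizeP.
have rootsP : all (root P) (enum F).
  by apply/allP => z _; rewrite rootE !hornerE subr_eq0 -(negbK (_ == _)) fixF.
by rewrite -ltnS -sizeP cardE max_poly_roots ?enum_uniq.
Qed.

Section FrobeniusPowers.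

Variables (F : fieldType) (p : nat).
Hypothesis pcharF : p \in [pchar F].

Lemma pchar_nat_expn n : [pchar F].-nat (p ^ n)%N.
Proof. by rewrite pnatX pnatE ?pcharF ?(pcharf_prime pcharF). Qed.

Lemma frob0 n : (0 : F) ^+ (p ^ n) = 0.
Proof. by rewrite expr0n expn_eq0 eqn0Ngt prime_gt0 ?(pcharf_prime pcharF). Qed.

Lemma frobD n (x y : F) : (x + y) ^+ (p ^ n) = x ^+ (p ^ n) + y ^+ (p ^ n).
Proof. exact/exprDn_pchar/pchar_nat_expn. Qed.

Lemma frobN n (x : F) : (- x) ^+ (p ^ n) = - x ^+ (p ^ n).
Proof. exact/exprNn_pchar/pchar_nat_expn. Qed.

Lemma frobB n (x y : F) : (x - y) ^+ (p ^ n) = x ^+ (p ^ n) - y ^+ (p ^ n).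
Proof. by rewrite frobD frobN. Qed.

End FrobeniusPowers.

Lemma natr2_neq0_pchar (F : fieldType) p :
  p \in [pchar F] -> odd p -> 2%:R != 0 :> F.
Proof.
move=> pcharF odd_p; rewrite -(dvdn_pcharf pcharF).
have p_gt1 := prime_gt1 (pcharf_prime pcharF).
by apply: contraL odd_p => /(@dvdn_leq _ 2 isT); case: (p) p_gt1 => [|[|[|]]].
Qed.

Lemma addfrob_inj (F : finFieldType) p m k :
  p \in [pchar F] -> 2%:R != 0 :> F -> #|F| = (p ^ m)%N -> odd (m %/ gcdn m k) ->
  injective (fun x : F => x + x ^+ (p ^ k)).
Proof.
move=> pcharF two_neq0 cardF odd_m' x y /= eq_xy.
have kera : (x - y) + (x - y) ^+ (p ^ k) = 0.
  by rewrite frobB // addrACA -opprD eq_xy subrr.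
set a := x - y in kera.
have aN : a ^+ (p ^ k) = - a by apply/eqP; rewrite -addr_eq0 addrC kera.
have a2k : a ^+ (p ^ (k + k)) = a by rewrite expnD exprM aN frobN // aN opprK.
have am : a ^+ (p ^ m) = a by rewrite -cardF expf_card.
have ak : a ^+ (p ^ k) = a.
  apply: fixed_expn_dvd (dvdn_gcdr m k) _.
  by rewrite -(gcdn_double odd_m') fixed_expn_gcd.
apply/eqP; rewrite -subr_eq0 -/a; move: kera; rewrite ak -mulr2n -mulr_natr.
by move/eqP; rewrite mulf_eq0 (negbTE two_neq0) orbF.
Qed.

Section NucleiOfCommutativeOperation.

Variables (T : finType) (op : T -> T -> T).

Lemma left_nucleusP a :
  reflect (forall x y, op (op a x) y = op a (op x y)) (a \in left_nucleus op).
Proof.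
rewrite inE; apply: (iffP forallP) => [nuc_a x y | nuc_a x].
  exact/eqP/(forallP (nuc_a x)).
by apply/forallP => y; apply/eqP.
Qed.

Lemma middle_nucleusP a :
  reflect (forall x y, op (op x a) y = op x (op a y)) (a \in middle_nucleus op).
Proof.
rewrite inE; apply: (iffP forallP) => [nuc_a x y | nuc_a x].
  exact/eqP/(forallP (nuc_a x)).
by apply/forallP => y; apply/eqP.
Qed.

Lemma right_nucleusP a :
  reflect (forall x y, op (op x y) a = op x (op y a)) (a \in right_nucleus op).
Proof.
rewrite inE; apply: (iffP forallP) => [nuc_a x y | nuc_a x].
  exact/eqP/(forallP (nuc_a x)).
by apply/forallP => y; apply/eqP.
Qed.

Hypothesis opC : commutative op.

Lemma left_nucleusC : left_nucleus op = right_nucleus op.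
Proof.
apply/setP => a; apply/left_nucleusP/right_nucleusP => nuc_a x y.
  by rewrite opC (opC x) -nuc_a opC (opC a).
by rewrite opC (opC a) -nuc_a opC (opC y).
Qed.

Lemma left_nucleus_sub_middle : left_nucleus op \subset middle_nucleus op.
Proof.
apply/subsetP => a /left_nucleusP nuc_a; apply/middle_nucleusP => x y.
by rewrite (opC x) nuc_a (opC x) -nuc_a (opC _ x).
Qed.

Lemma nucleusC : left_nucleus op = nucleus op /\ right_nucleus op = nucleus op.
Proof.
suff nucE : left_nucleus op = nucleus op by rewrite -left_nucleusC.
rewrite /nucleus -left_nucleusC -setIA (setIC (middle_nucleus op)) setIA setIid.
exact/esym/setIidPl/left_nucleus_sub_middle.
Qed.

End NucleiOfCommutativeOperation.

Section FrobeniusTwistedProduct.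

Variables (F : fieldType) (p k : nat).

Lemma circ_fixedl (e z : F) :
  e ^+ (p ^ k) = e -> circ p k e z = e * (z + z ^+ (p ^ k)).
Proof. by rewrite /circ => ->; ring. Qed.

Lemma circZl (e x y : F) : e ^+ (p ^ k) = e -> circ p k (e * x) y = e * circ p k x y.
Proof. by rewrite /circ exprMn => ->; ring. Qed.

Lemma circC (x y : F) : circ p k x y = circ p k y x.
Proof. by rewrite /circ addrC. Qed.

End FrobeniusTwistedProduct.

Definition pscale (F : fieldType) (e : F) (u : F * F) : F * F := (e * u.1, e * u.2).

Section Semifield.

Variables (F : finFieldType) (p k s : nat) (alpha : F).
Hypothesis pcharF : p \in [pchar F].
Hypothesis addfrob_injF : injective (fun x : F => x + x ^+ (p ^ k)).

Local Notation Lmap := (@Lmap F p k).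
Local Notation Linv := (@Linv F p k).
Local Notation mul := (smul p k alpha s).
Local Notation star := (sstar p k alpha s).

Lemma Lmap_inj : injective Lmap.
Proof. by move=> [a b] [c d] [/addfrob_injF -> ->]. Qed.

Lemma LinvK : cancel Linv Lmap.
Proof.
move=> u; have [g _ gK] := injF_bij Lmap_inj.
by rewrite /Linv; case: pickP => [x /eqP //|/(_ (g u))]; rewrite gK eqxx.
Qed.

Lemma LmapK : cancel Lmap Linv.
Proof. by move=> u; apply: Lmap_inj; rewrite LinvK. Qed.

Lemma Linv_fst u : (Linv u).1 + (Linv u).1 ^+ (p ^ k) = u.1.
Proof. by rewrite -[in RHS](LinvK u). Qed.

Lemma Linv_snd u : (Linv u).2 = u.2.
Proof. by rewrite -[in RHS](LinvK u). Qed.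

Lemma Linv_fst0 (w : F) : Linv (0, w) = (0, w).
Proof.
by rewrite -[in LHS](_ : Lmap (0, w) = (0, w)) ?LmapK // /Lmap frob0 ?addr0.
Qed.

Lemma smulC : commutative mul.
Proof.
move=> u v; rewrite /smul (circC p k u.1) (circC p k u.2); congr pair.
by rewrite addrC mulrC (mulrC u.1).
Qed.

Lemma sstarC : commutative star.
Proof. by move=> u v; rewrite /sstar smulC. Qed.

Lemma smulz0 (z : F) u : mul (z, 0) u = (circ p k z u.1, z * u.2).
Proof. by rewrite /smul /circ /= !(frob0 pcharF, mul0r, mulr0, addr0). Qed.

Lemma smul01 u : mul (0, 1) u = (alpha * (u.2 + u.2 ^+ (p ^ k)) ^+ (p ^ s), u.1).
Proof.
by rewrite /smul /circ /= !(frob0 pcharF, expr1n, mul0r, mulr0, mul1r, mulr1, add0r).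
Qed.

Lemma smul01z0 (z : F) : mul (0, 1) (z, 0) = (0, z).
Proof. by rewrite smul01 /= !(frob0 pcharF, addr0, mulr0). Qed.

Lemma LmapZ (e : F) u : e ^+ (p ^ k) = e -> Lmap (pscale e u) = pscale e (Lmap u).
Proof. by move=> fix_e; rewrite /Lmap /pscale /= exprMn fix_e mulrDr. Qed.

Lemma LinvZ (e : F) u : e ^+ (p ^ k) = e -> Linv (pscale e u) = pscale e (Linv u).
Proof. by move=> fix_e; apply: Lmap_inj; rewrite LmapZ // !LinvK. Qed.

Lemma smulZl (e : F) u v : e ^+ (p ^ k) = e -> e ^+ (p ^ s) = e ->
  mul (pscale e u) v = pscale e (mul u v).
Proof.
move=> fix_ek fix_es; rewrite /smul /pscale /= !circZl // exprMn fix_es.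
by congr pair; ring.
Qed.

Lemma sstar_Lmap_scalar (e : F) v :
  e ^+ (p ^ k) = e -> star (Lmap (e, 0)) v = pscale e v.
Proof.
by move=> fix_e; rewrite /sstar LmapK smulz0 circ_fixedl // -[in RHS](LinvK v).
Qed.

Lemma Lmap_scalar_in_left_nucleus (e : F) : e ^+ (p ^ k) = e -> e ^+ (p ^ s) = e ->
  Lmap (e, 0) \in left_nucleus star.
Proof.
move=> fix_ek fix_es; apply/left_nucleusP => x y.
by rewrite !sstar_Lmap_scalar // /sstar LinvZ // smulZl.
Qed.

Section RightNuclearElement.

Variables (e g z : F).
Hypothesis z_nonfixed : z ^+ (p ^ k) != z.
Hypothesis nuclear_eg :
  forall X Y, mul (Linv (mul X Y)) (e, g) = mul X (Linv (mul Y (e, g))).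

Lemma right_nuclear_fixed_k : e ^+ (p ^ k) = e.
Proof.
have := congr1 snd (nuclear_eg (0, 1) (z, 0)).
rewrite smul01z0 Linv_fst0 smul01 /= mul0r add0r => ze.
have := Linv_fst (mul (z, 0) (e, g)); rewrite -ze smulz0 /= => ze_circ.
have /eqP : (z - z ^+ (p ^ k)) * (e - e ^+ (p ^ k)) = 0.
  by rewrite -(subrr (circ p k z e)) -{1}ze_circ /circ exprMn; ring.
by rewrite mulf_eq0 !subr_eq0 eq_sym (negbTE z_nonfixed) => /eqP.
Qed.

Lemma right_nuclear_snd : g = 0.
Proof.
have := congr1 snd (nuclear_eg (z, 0) (z, 0)).
rewrite !smulz0 /= mulr0 !Linv_snd mul0r addr0 => eq_g.
have [//|g_neq0] := eqVneq g 0.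
have zz : (Linv (circ p k z z, 0)).1 = z * z.
  by apply: (mulIf g_neq0); rewrite eq_g mulrA.
have := Linv_fst (circ p k z z, 0); rewrite zz /= => zz_circ.
have /eqP : (z - z ^+ (p ^ k)) * (z - z ^+ (p ^ k)) = 0.
  by rewrite -(subrr (circ p k z z)) -{1}zz_circ /circ exprMn; ring.
by rewrite mulf_eq0 orbb subr_eq0 eq_sym (negbTE z_nonfixed).
Qed.

Lemma right_nuclear_fixed_s : alpha != 0 -> 2%:R != 0 :> F -> e ^+ (p ^ s) = e.
Proof.
move=> alpha_neq0 two_neq0.
have := congr1 fst (nuclear_eg (0, 1) (0, 1)).
rewrite right_nuclear_snd smul01 smul01z0 Linv_fst0 smulC smulz0 smul01 /=.
rewrite circ_fixedl ?right_nuclear_fixed_k // Linv_fst /= expr1n.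
rewrite (_ : e + e = (1 + 1) * e); last by ring.
have c_neq0 : alpha * (1 + 1) ^+ (p ^ s) != 0 :> F.
  by rewrite mulf_neq0 ?expf_neq0 -?mulr2n.
by rewrite exprMn => eq_e; apply: (mulIf c_neq0); rewrite eq_e; ring.
Qed.

End RightNuclearElement.

Lemma right_nucleus_Lmap_scalar a (z : F) :
  alpha != 0 -> 2%:R != 0 :> F -> z ^+ (p ^ k) != z -> a \in right_nucleus star ->
  exists e, [/\ e ^+ (p ^ k) = e, e ^+ (p ^ s) = e & a = Lmap (e, 0)].
Proof.
move=> alpha_neq0 two_neq0 z_nonfixed /right_nucleusP nuc_a.
case def_a : (Linv a) => [e g].
have nuclear_eg X Y : mul (Linv (mul X Y)) (e, g) = mul X (Linv (mul Y (e, g))).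
  by rewrite -def_a; have := nuc_a (Lmap X) (Lmap Y); rewrite /sstar !LmapK.
have g0 := right_nuclear_snd z_nonfixed nuclear_eg.
exists e; split; first exact: right_nuclear_fixed_k z_nonfixed nuclear_eg.
  exact: right_nuclear_fixed_s z_nonfixed nuclear_eg alpha_neq0 two_neq0.
by rewrite -g0 -def_a LinvK.
Qed.

End Semifield.

Theorem theorem3 (F : finFieldType) (p m k s : nat) (alpha : F) :
  prime p -> odd p -> p \in [pchar F] -> #|F| = (p ^ m)%N ->
  (0 < k)%N -> (k <= m./2)%N -> odd (m %/ gcdn m k) ->
  alpha ^+ (p ^ gcdn m k) = alpha ->
  ~~ [exists y : F, y ^+ 2 == alpha] ->
  (s <= m./2)%N ->
  left_nucleus (sstar p k alpha s) = nucleus (sstar p k alpha s) /\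
  right_nucleus (sstar p k alpha s) = nucleus (sstar p k alpha s) /\
  exists f : F -> F * F,
    [/\ {in Fsub F p (gcdn (gcdn m k) s) &, injective f},
        f @: Fsub F p (gcdn (gcdn m k) s) = nucleus (sstar p k alpha s),
        {in Fsub F p (gcdn (gcdn m k) s) &, forall x y, f (x + y) = padd (f x) (f y)} &
        {in Fsub F p (gcdn (gcdn m k) s) &, forall x y,
           f (x * y) = sstar p k alpha s (f x) (f y)}].
Proof.
(* Only alpha != 0 matters here; the other conditions on alpha and s are what
   make the product a semifield. *)
move=> p_prime odd_p pcharF cardF k_gt0 k_le_half odd_m' _ alpha_nonsquare _.
have two_neq0 := natr2_neq0_pchar pcharF odd_p.
have injF := addfrob_inj pcharF two_neq0 cardF odd_m'.
have alpha_neq0 : alpha != 0.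
  apply: contraNneq alpha_nonsquare => ->.
  by apply/existsP; exists 0; rewrite expr0n.
have [z z_nonfixed] : exists z : F, z ^+ (p ^ k) != z.
  have k_lt_m : (k < m)%N by have := odd_double_half m; lia.
  by apply: exists_expf_neq; rewrite ?cardF -?{1}(expn0 p) ltn_exp2l ?prime_gt1.
have [nucL nucR] := nucleusC (@sstarC F p k s alpha).
do 2!split => //; set t := gcdn (gcdn m k) s.
have fixed_t x : x \in Fsub F p t -> x ^+ (p ^ k) = x /\ x ^+ (p ^ s) = x.
  rewrite inE => /eqP fix_x; split; apply: fixed_expn_dvd fix_x.
    exact: dvdn_trans (dvdn_gcdl _ s) (dvdn_gcdr m k).
  exact: dvdn_gcdr.
exists (fun x => Lmap p k (x, 0)); split.
- by move=> x y _ _ /(Lmap_inj injF) [].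
- apply/setP => a; apply/imsetP/idP => [[x /fixed_t[xk xs] ->] | a_nuc].
    by rewrite -nucL Lmap_scalar_in_left_nucleus.
  have a_nucR : a \in right_nucleus (sstar p k alpha s) by rewrite nucR.
  have [e [ek es ->]] :=
    right_nucleus_Lmap_scalar pcharF injF alpha_neq0 two_neq0 z_nonfixed a_nucR.
  exists e => //; rewrite inE; apply/eqP.
  by rewrite !fixed_expn_gcd // -cardF expf_card.
- by move=> x y _ _; rewrite /Lmap /padd /= frobD // addr0 addrACA.
- move=> x y /fixed_t[xk _] /fixed_t[yk _].
  by rewrite sstar_Lmap_scalar // -LmapZ // /pscale /= mulr0.
Qed.
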